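(* Let $\theta=[a_1,a_2,\dots]$ be irrational with $a_1=a_2=a_3=1$, let $n\ge1$, and let $(x_k)_{k>0}$ be a finite or infinite sequence of real numbers (defined at least for $0<k\le q_n$) satisfying, for all indices $0<k<q_n$, the following: (1) $x_{q_j}<0$ if $j\equiv0,1\pmod4$ and $x_{q_j}>0$ otherwise; (2) if $k=\gamma q_j$ with $1<\gamma\le a_{j+1}$ then $x_{q_j}$ and $x_k$ have opposite signs; (3) if $k=\sum_{j\ge m}\gamma_jq_j$ is the Ostrowski representation of $k$ with lowest nonzero digit $\gamma_m$, then $x_k$ and $x_{\gamma_mq_m}$ have the same sign. Let $\mathrm{Neg}(m)$ be the number of $0<k<m$ with $x_k<0$. Then $\mathrm{Neg}(q_n)$ is even if $n\equiv0,1\pmod4$ and odd otherwise.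
   Context: $\theta=[a_1,a_2,\dots]=1/(a_1+1/(a_2+\cdots))$, $q_n$ the denominator of $[a_1,\dots,a_n]$, $q_n=a_nq_{n-1}+q_{n-2}$ (here $q_1=1,q_2=2$). Ostrowski representation: every positive integer $k$ is uniquely $k=\sum_{j\ge1}\gamma_jq_j$ with integers $0\le\gamma_j\le a_{j+1}$, finitely many nonzero, and $\gamma_j=a_{j+1}\Rightarrow\gamma_{j-1}=0$. *)

From mathcomp Require Import all_boot all_order all_algebra.
From mathcomp Require Export reals.
Set Implicit Arguments. Unset Strict Implicit. Unset Printing Implicit Defensive.
Import Order.TTheory GRing.Theory Num.Theory.

(* An irrational theta = [a_1, a_2, ...] = 1/(a_1 + 1/(a_2 + ...)) is given by
   its (infinite) sequence of partial quotients a : nat -> nat, a j >= 1 for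
   j >= 1 (a 0 is unused). *)
Definition cf_digits (a : nat -> nat) : Prop := forall j, 0 < j -> 0 < a j.

Fixpoint qden (a : nat -> nat) (n : nat) : nat :=
  match n with
  | 0 => 1
  | 1 => a 1
  | (m.+1 as m1).+1 => a m1.+1 * qden a m1 + qden a m
  end.

Definition ostrowski (a : nat -> nat) (k : nat) (g : nat -> nat) : Prop :=
  g 0 = 0 /\
  (forall j, g j <= a j.+1) /\
  (forall j, 1 < j -> g j = a j.+1 -> g j.-1 = 0) /\
  exists N, (forall j, N <= j -> g j = 0) /\
            k = \sum_(1 <= j < N) g j * qden a j.

Section Signs.
Variable R : realType.
Local Open Scope ring_scope.
Definition opp_sign (x y : R) : Prop := (x < 0 /\ 0 < y) \/ (0 < x /\ y < 0).
Definition same_sign (x y : R) : Prop := (x < 0 /\ y < 0) \/ (0 < x /\ 0 < y).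
Definition Neg (x : nat -> R) (m : nat) : nat := count (fun k => x k < 0) (iota 1 m.-1).
End Signs.

From mathcomp Require Import all_boot all_order all_algebra.
From mathcomp Require Import zify.
Import Order.TTheory GRing.Theory Num.Theory.
Set Implicit Arguments. Unset Strict Implicit.

(* Split 0 < k < q_(M+1) = a_(M+1) q_M + q_(M-1) into the blocks g q_M + (0, q_M],
   0 <= g < a_(M+1), and the tail a_(M+1) q_M + (0, q_(M-1)).  Putting the digit g
   in position M of the Ostrowski representation of 0 < r < q_M keeps its lowest
   nonzero digit, so by (3) x_(g q_M + r) has the sign of x_r, while by (2) the
   block ends g q_M with g > 1 have the sign opposite to x_(q_M).  Hence
     Neg(q_(M+1)) = a_(M+1) Neg(q_M) + [x_(q_M) < 0] + (a_(M+1) - 1) [x_(q_M) > 0]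
                    + Neg(q_(M-1)).
   By induction and (1), Neg(q_M) is odd exactly when x_(q_M) > 0, so the first three
   terms add up to an odd number and Neg(q_(M+1)), Neg(q_(M-1)) have opposite
   parities: this is the period-4 pattern. *)

Lemma qdenS a L : 0 < L -> qden a L.+1 = a L.+1 * qden a L + qden a L.-1.
Proof. by case: L. Qed.

Section Denominators.
Variable a : nat -> nat.
Hypothesis a_pos : cf_digits a.

Lemma qden_gt0 j : 0 < qden a j.
Proof.
suff: 0 < qden a j /\ 0 < qden a j.+1 by case.
elim: j => [|j [qj qjS]]; first by split => //; exact: a_pos.
by split=> //=; rewrite addn_gt0 qj orbT.
Qed.

Lemma qden_leS j : qden a j <= qden a j.+1.
Proof.
case: j => [|j]; first exact: a_pos.
by rewrite [qden a j.+2]qdenS // (leq_trans _ (leq_addr _ _)) // leq_pmull ?a_pos.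
Qed.

Lemma qden_ltS j : 0 < j -> qden a j < qden a j.+1.
Proof.
case: j => [|j] // _; rewrite [qden a j.+2]qdenS // -addn1.
by apply: leq_add; rewrite ?leq_pmull ?a_pos ?qden_gt0.
Qed.

Lemma leading_digit_lt_qdenS L d r : 0 < L -> d <= a L.+1 -> r < qden a L ->
  (d = a L.+1 -> r < qden a L.-1) -> d * qden a L + r < qden a L.+1.
Proof.
move=> L_gt0 d_le r_lt r_lt'; rewrite qdenS //.
case: (eqVneq d (a L.+1)) => [d_max|d_ne]; first by rewrite d_max ltn_add2l r_lt'.
have d_lt : d < a L.+1 by rewrite ltn_neqAle d_ne.
apply: leq_trans (leq_addr _ _); nia.
Qed.

Lemma qden_monotone : {homo qden a : i j / i <= j}.
Proof. exact: homo_leq leqnn leq_trans qden_leS. Qed.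

End Denominators.

Definition set_digit (g : nat -> nat) (L d j : nat) : nat :=
  if j == L then d else g j.

Section OstrowskiBelow.
Variable a : nat -> nat.
Hypothesis a_pos : cf_digits a.

Record ostrowski_below (L r : nat) (g : nat -> nat) : Prop := OstrowskiBelow {
  digit0 : g 0 = 0;
  digit_le : forall j, g j <= a j.+1;
  digit_max : forall j, 1 < j -> g j = a j.+1 -> g j.-1 = 0;
  digit_high : forall j, L <= j -> g j = 0;
  digit_sum : r = \sum_(1 <= j < L) g j * qden a j }.

Lemma ostrowski_below_ostrowski L r g : ostrowski_below L r g -> ostrowski a r g.
Proof. by case=> g0 g_le g_max g_high r_sum; do 3 split=> //; exists L. Qed.

Lemma ostrowski_below0 L : ostrowski_below L 0 (fun _ => 0).
Proof. by split=> //; rewrite big1. Qed.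

Lemma ostrowski_belowS L r g : ostrowski_below L r g -> ostrowski_below L.+1 r g.
Proof.
case=> g0 g_le g_max g_high ->; split=> // [j /ltnW/g_high //|].
case: L g_high => [|L] g_high; first by rewrite !big_geq.
by rewrite [in RHS]big_nat_recr //= g_high // mul0n addn0.
Qed.

Lemma ostrowski_below_set L r g d : 0 < L -> ostrowski_below L r g ->
  d <= a L.+1 -> (d = a L.+1 -> g L.-1 = 0) ->
  ostrowski_below L.+1 (d * qden a L + r) (set_digit g L d).
Proof.
rewrite /set_digit => L_gt0 [g0 g_le g_max g_high ->] d_le d_max; split.
- by rewrite eq_sym gtn_eqF.
- by move=> j; case: eqP => [->|].
- move=> j j_gt1; case: eqP => [-> /d_max|_ /= gj]; first by rewrite ltn_eqF ?ltn_predL.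
  case: eqP => [jL|_]; last exact: g_max.
  move: gj; rewrite g_high; last by rewrite -jL leq_pred.
  by move=> gj; have := a_pos (ltn0Sn j); rewrite -gj.
- by move=> j Lj; rewrite gtn_eqF // g_high // ltnW.
- rewrite big_nat_recr //= eqxx addnC; congr (_ + _).
  by apply: eq_big_nat => j /andP[_ jL]; rewrite ltn_eqF.
Qed.

(* Existence below smaller bounds is a hypothesis so that this lemma is also the
   induction step of [ostrowski_below_exists]. *)
Lemma ostrowski_below_set_exists L d r : 0 < L -> d <= a L.+1 -> r < qden a L ->
  (d = a L.+1 -> r < qden a L.-1) ->
  (forall K s, K <= L -> s < qden a K -> exists g, ostrowski_below K s g) ->
  exists g, ostrowski_below L r g /\
            ostrowski_below L.+1 (d * qden a L + r) (set_digit g L d).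
Proof.
move=> L_gt0 d_le r_lt r_lt' rep_ex.
suff [g [rg g_top]] : exists g, ostrowski_below L r g /\ (d = a L.+1 -> g L.-1 = 0).
  by exists g; split; last exact: ostrowski_below_set.
case: (eqVneq d (a L.+1)) => [d_max|d_lt].
  have [g rg] := rep_ex L.-1 r (leq_pred L) (r_lt' d_max).
  exists g; split; last by move=> _; exact: digit_high rg _ (leqnn _).
  by have := ostrowski_belowS rg; rewrite prednK.
have [g rg] := rep_ex L r (leqnn L) r_lt.
by exists g; split=> // d_max; rewrite d_max eqxx in d_lt.
Qed.

Lemma ostrowski_below_lowest L r g : 0 < r -> ostrowski_below L r g ->
  exists2 m, m < L & g m != 0 /\ forall j, j < m -> g j = 0.
Proof.
move=> r_gt0 [_ _ _ g_high r_sum].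
have /hasP[j _ /andP[_]] : has (fun j => true && (g j * qden a j != 0)) (index_iota 1 L).
  by rewrite -sum_nat_seq_neq0 -r_sum -lt0n.
rewrite muln_eq0 negb_or => /andP[j_nz _].
have g_nz : exists j, g j != 0 by exists j.
case: (ex_minnP g_nz) => m m_nz m_min; exists m.
  by rewrite ltnNge; apply/negP => /g_high gm0; rewrite gm0 in m_nz.
by split=> // i; apply: contraTeq => /m_min; rewrite leqNgt.
Qed.

Hypothesis a1 : a 1 = 1.

Lemma ostrowski_below_exists L r : r < qden a L -> exists g, ostrowski_below L r g.
Proof.
elim/ltn_ind: L r => -[|[|L]] IH r r_lt.
- by exists (fun _ => 0); move: r_lt; rewrite ltnS leqn0 => /eqP ->; exact: ostrowski_below0.
- by exists (fun _ => 0); move: r_lt; rewrite /= a1 ltnS leqn0 => /eqP ->; exact: ostrowski_below0.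
have rep_ex K s : K <= L.+1 -> s < qden a K -> exists g, ostrowski_below K s g.
  by move=> K_le; apply: IH; rewrite ltnS.
have q_gt0 := qden_gt0 a_pos L.+1.
move: r_lt; rewrite qdenS // => r_lt.
case: (ltnP r (a L.+2 * qden a L.+1)) => r_small.
- have [||g [_ rg]] := @ostrowski_below_set_exists L.+1 (r %/ qden a L.+1)
      (r %% qden a L.+1) isT _ (ltn_pmod r q_gt0) _ rep_ex.
  + by rewrite ltnW // ltn_divLR.
  + by move=> d_max; move: r_small; rewrite -ltn_divLR // d_max ltnn.
  by exists (set_digit g L.+1 (r %/ qden a L.+1)); rewrite {1}(divn_eq r (qden a L.+1)).
- have r_sub : r - a L.+2 * qden a L.+1 < qden a L by rewrite ltn_subLR.
  have [g [_ rg]] := @ostrowski_below_set_exists L.+1 (a L.+2)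
    (r - a L.+2 * qden a L.+1) isT (leqnn _)
    (leq_trans r_sub (qden_leS a_pos L)) (fun _ => r_sub) rep_ex.
  by exists (set_digit g L.+1 (a L.+2)); rewrite addnC subnK in rg.
Qed.

End OstrowskiBelow.

Lemma same_sign_ltr0 (R : realType) (u v : R) : same_sign u v -> (u < 0)%R = (v < 0)%R.
Proof. by case=> -[u0 v0]; [rewrite u0 v0 | rewrite !ltNge (ltW u0) (ltW v0)]. Qed.

Lemma opp_sign_ltr0 (R : realType) (u v : R) : opp_sign u v -> (v < 0)%R = ~~ (u < 0)%R.
Proof.
by case=> -[u0 v0]; [rewrite u0 ltNge (ltW v0) | rewrite v0 ltNge (ltW u0)].
Qed.

Lemma NegS (R : realType) (x : nat -> R) m : 0 < m -> Neg x m.+1 = Neg x m + (x m < 0)%R.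
Proof.
by case: m => // m _; rewrite /Neg !succnK -{1}[m.+1]addn1 iotaD count_cat add1n /= addn0.
Qed.

Lemma Neg_shiftD (R : realType) (x : nat -> R) c m : 0 < m ->
  (forall r, 0 < r < m -> (x (c + r) < 0)%R = (x r < 0)%R) ->
  Neg x (c + m) = Neg x c.+1 + Neg x m.
Proof.
case: m => // m _ x_shift; rewrite /Neg addnS /= iotaD count_cat add1n.
congr (_ + _); rewrite -addn1 iotaDl count_map; apply: eq_in_count => r.
by rewrite mem_iota add1n ltnS => r_in; apply: x_shift.
Qed.

Section SignPattern.
Variables (R : realType) (a : nat -> nat) (n : nat) (x : nat -> R).
Hypotheses (a_pos : cf_digits a) (a1 : a 1 = 1).
Hypothesis sign_mul : forall j gam, 1 <= j -> 1 < gam <= a j.+1 ->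
  0 < gam * qden a j < qden a n -> opp_sign (x (qden a j)) (x (gam * qden a j)).
Hypothesis sign_lowest : forall k g m, 0 < k < qden a n -> ostrowski a k g ->
  g m != 0 -> (forall j, j < m -> g j = 0) -> same_sign (x k) (x (g m * qden a m)).

Lemma neg_shift L d r : 0 < L < n -> 0 < d <= a L.+1 -> 0 < r < qden a L ->
  (d = a L.+1 -> r < qden a L.-1) -> (x (d * qden a L + r) < 0)%R = (x r < 0)%R.
Proof.
case/andP=> L_gt0 L_lt /andP[d_gt0 d_le] /andP[r_gt0 r_lt] r_lt'.
have [g [rg rg']] := ostrowski_below_set_exists a_pos L_gt0 d_le r_lt r_lt'
  (fun K s _ => ostrowski_below_exists a_pos a1 (L := K) (r := s)).
have [m m_lt [m_nz m_low]] := ostrowski_below_lowest r_gt0 rg.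
have qS_le : qden a L.+1 <= qden a n := qden_monotone a_pos L_lt.
have k_lt : d * qden a L + r < qden a n.
  exact: leq_trans (leading_digit_lt_qdenS L_gt0 d_le r_lt r_lt') qS_le.
have r_lt_n : r < qden a n.
  exact: leq_trans r_lt (leq_trans (ltnW (qden_ltS a_pos L_gt0)) qS_le).
have gm : set_digit g L d m = g m by rewrite /set_digit ltn_eqF.
have s_k : same_sign (x (d * qden a L + r)) (x (g m * qden a m)).
  rewrite -gm; apply: sign_lowest _ (ostrowski_below_ostrowski rg') _ _.
  - by rewrite addn_gt0 r_gt0 orbT k_lt.
  - by rewrite gm.
  - by move=> j j_lt; rewrite /set_digit ltn_eqF ?m_low // (ltn_trans j_lt m_lt).
have s_r : same_sign (x r) (x (g m * qden a m)).
  by apply: sign_lowest _ (ostrowski_below_ostrowski rg) m_nz m_low; rewrite r_gt0.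
by rewrite (same_sign_ltr0 s_k) (same_sign_ltr0 s_r).
Qed.

Lemma Neg_mul_qden L gam : 0 < L < n -> 0 < gam <= a L.+1 ->
  Neg x (gam * qden a L).+1 = gam * Neg x (qden a L) + (x (qden a L) < 0)%R
                              + (gam - 1) * ~~ (x (qden a L) < 0)%R.
Proof.
move=> L_range; have /andP[L_gt0 L_lt] := L_range; have q_gt0 := qden_gt0 a_pos L.
elim: gam => [//|gam IH /andP[_ gam_le]].
case: gam IH gam_le => [_ _|gam IH gam_lt].
  by rewrite !mul1n subnn mul0n NegS // addn0.
have x_mul : (x (gam.+2 * qden a L) < 0)%R = ~~ (x (qden a L) < 0)%R.
  apply/opp_sign_ltr0/sign_mul => //; rewrite muln_gt0 q_gt0 /=.
  apply: leq_trans (qden_monotone a_pos L_lt).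
  by rewrite -[_ * _]addn0; apply: leading_digit_lt_qdenS => // _; exact: qden_gt0.
rewrite NegS ?muln_gt0 ?q_gt0 // x_mul mulSnr (Neg_shiftD q_gt0); last first.
  move=> r r_range; apply: (neg_shift (d := gam.+1) L_range (ltnW gam_lt) r_range) => d_max.
  by rewrite d_max ltnn in gam_lt.
rewrite IH ?(ltnW gam_lt) //; case: (x (qden a L) < 0)%R; lia.
Qed.

Lemma Neg_qdenS M : 0 < M < n ->
  Neg x (qden a M.+1) = a M.+1 * Neg x (qden a M) + (x (qden a M) < 0)%R
                        + (a M.+1 - 1) * ~~ (x (qden a M) < 0)%R + Neg x (qden a M.-1).
Proof.
move=> M_range; have /andP[M_gt0 _] := M_range.
have a_range : 0 < a M.+1 <= a M.+1 by rewrite leqnn andbT a_pos.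
rewrite qdenS // (Neg_shiftD (qden_gt0 a_pos M.-1)) ?Neg_mul_qden //.
move=> r r_range; have /andP[r_gt0 r_lt] := r_range.
apply: neg_shift a_range _ (fun _ => r_lt) => //.
by rewrite r_gt0 (leq_trans r_lt) // qden_monotone ?leq_pred.
Qed.

End SignPattern.

Lemma odd_block A N (s : bool) : 0 < A -> odd N = ~~ s -> odd (A * N + s + (A - 1) * ~~ s).
Proof.
by case: A => // A _; case: s => oddN; rewrite subSS subn0 !oddD !oddM oddN /=; case: (odd A).
Qed.

Lemma mod4_lt2_add2 k : ((k + 2) %% 4 < 2) = ~~ (k %% 4 < 2).
Proof.
rewrite -modnDml; have : k %% 4 < 4 by rewrite ltn_mod.
by case: (k %% 4) => [|[|[|[|]]]].
Qed.

Theorem lemma2p5 (R : realType) (a : nat -> nat) (n : nat) (x : nat -> R) :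
  cf_digits a -> a 1 = 1 -> a 2 = 1 -> a 3 = 1 -> 1 <= n ->
  (* (1) *)
  (forall j, 1 <= j -> 0 < qden a j < qden a n ->
     if (j %% 4 == 0) || (j %% 4 == 1) then (x (qden a j) < 0)%R
     else (0 < x (qden a j))%R) ->
  (* (2) *)
  (forall j gam, 1 <= j -> 1 < gam <= a j.+1 -> 0 < gam * qden a j < qden a n ->
     opp_sign (x (qden a j)) (x (gam * qden a j))) ->
  (* (3) *)
  (forall k g m, 0 < k < qden a n -> ostrowski a k g ->
     g m != 0 -> (forall j, j < m -> g j = 0) ->
     same_sign (x k) (x (g m * qden a m))) ->
  odd (Neg x (qden a n)) = ~~ ((n %% 4 == 0) || (n %% 4 == 1)).
Proof.
move=> a_pos a1 _ _ _ sign_q sign_mul sign_lowest.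
have neg_q M : 0 < M < n -> (x (qden a M) < 0)%R = (M %% 4 < 2).
  case/andP=> M_gt0 M_lt.
  have q_lt : qden a M < qden a n.
    exact: leq_trans (qden_ltS a_pos M_gt0) (qden_monotone a_pos M_lt).
  move: (sign_q M M_gt0); rewrite qden_gt0 // q_lt => /(_ isT).
  by case: (M %% 4) => [|[|[|[|k]]]] /= x_q; rewrite ?x_q // ltNge (ltW x_q).
suff odd_Neg L : L <= n -> odd (Neg x (qden a L)) = ~~ (L %% 4 < 2).
  by rewrite odd_Neg //; case: (n %% 4) => [|[|]].
elim/ltn_ind: L => -[|[|M]] IH M_le; [by [] | by rewrite /= a1 |].
have M_range : 0 < M.+1 < n by [].
have IH_M1 := IH M.+1 (ltnSn _) (ltnW M_le).
have IH_M := IH M (leqnSn _) (ltnW (ltnW M_le)).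
rewrite (Neg_qdenS a_pos a1 sign_mul sign_lowest M_range) oddD.
rewrite odd_block ?a_pos ?IH_M1 ?neg_q // IH_M /=.
by rewrite -[M.+2]addn2 mod4_lt2_add2 negbK.
Qed.
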